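(* In the setting of the split chain (context), with $N=\sup\{i\in\mathbb{N}\colon mS_{i+1}+m-1\le n\}$ ($\sup\emptyset=0$), if $\|T_1\|_{\psi_1},\|T_2\|_{\psi_1}\le\tau$, then $$\mathbb{P}\big(N>\lfloor 3n/(m\mathbb{E} T_2)\rfloor\big)\le K\exp\Big(-\frac1K\frac{n\mathbb{E} T_2}{m\tau^2}\Big),$$ where $K$ is a universal constant.
   Context: Markov chain $X_1,X_2,\ldots$ on $(\mathcal{S},\mathcal{B})$ satisfying the Minorization condition with parameter $m\ge1$, realized as a split chain $(X_n,R_n)$, $R_n\in\{0,1\}$, with $T_1=\inf\{n>0\colon R_{nm}=1\}$, $T_{i+1}=\inf\{n>0\colon R_{(T_1+\cdots+T_i+n)m}=1\}$, $S_i=T_1+\cdots+T_i$; the $T_i$ are independent positive integer valued and $T_2,T_3,\ldots$ are i.i.d. $\|\cdot\|_{\psi_1}$ is the Orlicz norm with $\psi_1(x)=e^x-1$. *)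

From Stdlib Require Import Reals Lra Lia List.
Open Scope R_scope.

(* The outcome space is the set of
   sequences t : nat -> nat with t j >= 1 for j >= 1 (t j is the value of T_j,
   index 0 unused).  The T_j are independent, T_1 has law p1 and T_2, T_3, ...
   have common law p2 (probability mass functions on the positive integers). *)

Definition is_pmf_pos (p : nat -> R) : Prop :=
  (forall k, 0 <= p k) /\ p 0%nat = 0 /\ infinite_sum p 1.

Fixpoint sum_1_to (B : nat) (g : nat -> R) : R :=
  match B with
  | O => 0
  | S B' => sum_1_to B' g + g B
  end.

Fixpoint box_sum (L B : nat) (f : list nat -> R) : R :=
  match L with
  | O => f nil
  | S L' => sum_1_to B (fun v => box_sum L' B (fun s => f (v :: s)))
  end.

(* Probability of the cylinder {T_1 = s_1, ..., T_L = s_L}. *)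
Definition cyl_weight (p1 p2 : nat -> R) (s : list nat) : R :=
  match s with
  | nil => 1
  | v :: s' => p1 v * fold_right (fun w acc => p2 w * acc) 1 s'
  end.

Definition cyl_sub (s : list nat) (A : (nat -> nat) -> Prop) : Prop :=
  forall t : nat -> nat,
    (forall j, (1 <= j <= length s)%nat -> t j = nth (j - 1) s 0%nat) ->
    (forall j, (length s < j)%nat -> (1 <= t j)%nat) ->
    A t.

(* x is the probability of a finite disjoint union of cylinders contained in A. *)
Definition cyl_inner (p1 p2 : nat -> R) (A : (nat -> nat) -> Prop) (x : R) : Prop :=
  exists (L B : nat) (c : list nat -> bool),
    (forall s, c s = true -> cyl_sub s A) /\
    x = box_sum L B (fun s => if c s then cyl_weight p1 p2 s else 0).

(* P(A) <= b.  For events A that are (countable) unions of cylinders -- such as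
   the event considered below -- P(A) is the supremum of the cyl_inner values. *)
Definition Prob_le (p1 p2 : nat -> R) (A : (nat -> nat) -> Prop) (b : R) : Prop :=
  forall x, cyl_inner p1 p2 A x -> x <= b.

(* E exp(T / c) <= 2 (nonnegative series: all partial sums bounded by 2). *)
Definition Eexp_le2 (p : nat -> R) (c : R) : Prop :=
  forall M : nat, sum_f_R0 (fun k => p k * exp (INR k / c)) M <= 2.

(* r = ||T||_{psi_1} = inf {c > 0 : E exp(|T|/c) <= 2}, psi_1(x) = e^x - 1. *)
Definition psi1_norm (p : nat -> R) (r : R) : Prop :=
  is_lub (fun y => exists c, 0 < c /\ Eexp_le2 p c /\ y = - c) (- r).

Fixpoint Ssum (t : nat -> nat) (i : nat) : nat :=
  match i with
  | O => O
  | S i' => (Ssum t i' + t i)%nat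
  end.

Definition Nset (m n : nat) (t : nat -> nat) (i : nat) : Prop :=
  (m * Ssum t (S i) + m - 1 <= n)%nat.

Definition is_N (m n : nat) (t : nat -> nat) (N : nat) : Prop :=
  ((forall i, ~ Nset m n t i) /\ N = 0%nat) \/
  (Nset m n t N /\ forall i, Nset m n t i -> (i <= N)%nat).

From Stdlib Require Import Reals ZArith Lra Lia Classical List.
Open Scope R_scope.

(* If N > I then m S_{I+1} + m - 1 <= n for some index >= I + 1,
   so S_{I+2} <= n/m =: a (the partial sums are nondecreasing).  Chernoff's
   method bounds the probability of {S_k <= a} by
       e^{lambda a} E e^{-lambda S_k}
     = e^{lambda a} E e^{-lambda T_1} (E e^{-lambda T_2})^{k-1},
   where E e^{-lambda T_1} <= 1.  Any c with E e^{T_2/c} <= 2 gives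
   E T_2^2 <= 8 c^2, hence E e^{-lambda T_2} <= 1 - lambda mu + 8 lambda^2 c^2,
   which is at most e^{-lambda mu/2} when 16 lambda c^2 <= mu; since
   ||T_2||_psi1 <= tau we may take c <= 2 tau and lambda = mu/(64 tau^2).
   As (I + 1) mu >= 3a, the bound becomes e^{-lambda a/2}, i.e. K = 128. *)

Lemma exp_le_mono (x y : R) : x <= y -> exp x <= exp y.
Proof. intros [Hlt | ->]; [left; apply exp_increasing; exact Hlt | lra]. Qed.

(* e^x >= 1 + x + x^2/4 on [0, +oo), from e^x = (e^{x/2})^2 and e^y >= 1 + y. *)
Lemma exp_quadratic_lower (x : R) : 0 <= x -> 1 + x + x ^ 2 / 4 <= exp x.
Proof.
  intros Hx.
  assert (Hhalf : exp x = exp (x / 2) * exp (x / 2))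
    by (rewrite <- exp_plus; f_equal; field).
  pose proof (exp_ineq1_le (x / 2)). rewrite Hhalf. nra.
Qed.

Lemma exp_neg_quadratic_upper (x : R) : 0 <= x -> exp (- x) <= 1 - x + x ^ 2.
Proof.
  intros Hx.
  pose proof (exp_quadratic_lower x Hx) as Hlow.
  pose proof (exp_pos x) as Hpos.
  assert (Hx3 : 0 <= x ^ 3) by (apply pow_le; lra).
  assert (Hquad : 0 < 1 - x + x ^ 2) by nra.
  assert (Hprod : 1 <= (1 - x + x ^ 2) * exp x) by nra.
  rewrite exp_Ropp. apply (Rmult_le_reg_r (exp x)); [lra|].
  rewrite Rinv_l; lra.
Qed.

Lemma sq_le_4exp (x : R) : 0 <= x -> x ^ 2 <= 4 * exp x.
Proof. intros Hx. pose proof (exp_quadratic_lower x Hx). nra. Qed.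

Lemma lim_le_of_upper_bound (u : nat -> R) (l y : R) :
  Un_cv u l -> (forall M, u M <= y) -> l <= y.
Proof.
  intros Hu Hy. apply (Rle_cv_lim (Vn := fun _ => y) Hy Hu).
  intros eps Heps. exists 0%nat. intros M _.
  unfold R_dist. rewrite Rminus_diag, Rabs_R0. lra.
Qed.

Lemma partial_sum_mono (f : nat -> R) (M M' : nat) :
  (forall k, 0 <= f k) -> (M <= M')%nat -> sum_f_R0 f M <= sum_f_R0 f M'.
Proof.
  intros Hf HM. induction HM as [|M' _ IH]; [lra|].
  simpl. specialize (Hf (S M')). lra.
Qed.

Lemma partial_sum_combination (f g h : nat -> R) (b c : R) (M : nat) :
  sum_f_R0 (fun v => f v - b * g v + c * h v) M =
  sum_f_R0 f M - b * sum_f_R0 g M + c * sum_f_R0 h M.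
Proof. induction M; simpl; [ring | rewrite IHM; ring]. Qed.

Lemma sum_1_to_ext (B : nat) (f g : nat -> R) :
  (forall v, f v = g v) -> sum_1_to B f = sum_1_to B g.
Proof. intros H. induction B; simpl; [lra | rewrite IHB, H; lra]. Qed.

Lemma sum_1_to_le (B : nat) (f g : nat -> R) :
  (forall v, f v <= g v) -> sum_1_to B f <= sum_1_to B g.
Proof. intros H. induction B; simpl; [lra | specialize (H (S B)); lra]. Qed.

Lemma sum_1_to_scal_r (B : nat) (f : nat -> R) (a : R) :
  sum_1_to B (fun v => f v * a) = sum_1_to B f * a.
Proof. induction B; simpl; [ring | rewrite IHB; ring]. Qed.

Lemma sum_1_to_nonneg (B : nat) (f : nat -> R) :
  (forall v, 0 <= f v) -> 0 <= sum_1_to B f.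
Proof. intros H. induction B; simpl; [lra | specialize (H (S B)); lra]. Qed.

Lemma sum_1_to_partial_sum (B : nat) (g : nat -> R) :
  sum_1_to B g = sum_f_R0 g B - g 0%nat.
Proof. induction B; simpl; [ring | rewrite IHB; ring]. Qed.

Lemma box_sum_ext (L B : nat) (f g : list nat -> R) :
  (forall s, f s = g s) -> box_sum L B f = box_sum L B g.
Proof.
  revert f g. induction L; intros f g H; simpl; auto.
  apply sum_1_to_ext. intro v. apply IHL. auto.
Qed.

Lemma box_sum_le (L B : nat) (f g : list nat -> R) :
  (forall s, length s = L -> f s <= g s) -> box_sum L B f <= box_sum L B g.
Proof.
  revert f g. induction L; intros f g H; simpl.
  - apply H. reflexivity.
  - apply sum_1_to_le. intro v. apply IHL. intros s Hs. apply H. simpl. lia.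
Qed.

Lemma box_sum_scal (L B : nat) (a : R) (f : list nat -> R) :
  box_sum L B (fun s => a * f s) = a * box_sum L B f.
Proof.
  revert f. induction L; intros f; simpl; auto.
  rewrite Rmult_comm, <- sum_1_to_scal_r. apply sum_1_to_ext. intro v.
  rewrite Rmult_comm. apply (IHL (fun s => f (v :: s))).
Qed.

Lemma box_sum_zero (L B : nat) : box_sum L B (fun _ => 0) = 0.
Proof.
  rewrite (box_sum_ext L B _ (fun _ => 0 * 0)) by (intros; ring).
  rewrite (box_sum_scal L B 0 (fun _ => 0)). ring.
Qed.

Lemma box_sum_nonneg (L B : nat) (f : list nat -> R) :
  (forall s, 0 <= f s) -> 0 <= box_sum L B f.
Proof.
  revert f. induction L; intros f H; simpl; auto.
  apply sum_1_to_nonneg. intro v. apply IHL. auto.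
Qed.

(* A weight that factors off its first coordinate gives a product of sums:
   this is the independence of the coordinates in the cylinder model. *)
Lemma box_sum_cons_factor (L B : nat) (f h : list nat -> R) (a : nat -> R) :
  (forall v s, f (v :: s) = a v * h s) ->
  box_sum (S L) B f = sum_1_to B a * box_sum L B h.
Proof.
  intros Hf. simpl. rewrite <- sum_1_to_scal_r. apply sum_1_to_ext. intro v.
  rewrite (box_sum_ext L B _ (fun s => a v * h s)) by auto.
  apply box_sum_scal.
Qed.

Lemma pmf_partial_mass_le1 (p : nat -> R) (B : nat) :
  is_pmf_pos p -> sum_1_to B p <= 1.
Proof.
  intros [Hnn [Hp0 Hsum]].
  rewrite sum_1_to_partial_sum, Hp0. pose proof (sum_incr p B 1 Hsum Hnn). lra.
Qed.

Lemma mean_ge1 (p : nat -> R) (mu : R) :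
  is_pmf_pos p -> infinite_sum (fun k => INR k * p k) mu -> 1 <= mu.
Proof.
  intros [Hnn [Hp0 Hsum]] Hmu. refine (Rle_cv_lim _ Hsum Hmu).
  intro M. apply sum_Rle. intros [|v] _.
  - rewrite Hp0. simpl. lra.
  - pose proof (Hnn (S v)). pose proof (pos_INR v). rewrite S_INR. nra.
Qed.

(* E e^{T/c} <= 2 forces c >= 1 when T >= 1, since otherwise E e^{T/c} >= e^{1/c} > 2. *)
Lemma Eexp_le2_ge1 (p : nat -> R) (c : R) :
  is_pmf_pos p -> 0 < c -> Eexp_le2 p c -> 1 <= c.
Proof.
  intros [Hnn [Hp0 Hsum]] Hc HE. apply Rnot_lt_le. intro Hlt.
  set (E := exp (1 / c)).
  assert (HE2 : 2 < E).
  { assert (1 < 1 / c) by (apply (Rmult_lt_reg_r c); [lra|]; field_simplify; lra).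
    pose proof (exp_ineq1 (1 / c)). unfold E. lra. }
  assert (Hbound : forall M, sum_f_R0 p M <= 2 / E).
  { intro M. apply (Rmult_le_reg_l E); [lra|].
    replace (E * (2 / E)) with 2 by (field; lra).
    apply Rle_trans with (2 := HE M). rewrite scal_sum. apply sum_Rle.
    intros [|v] _; [rewrite Hp0; lra|].
    pose proof (Hnn (S v)). apply Rmult_le_compat_l; auto.
    unfold E. apply exp_le_mono. unfold Rdiv. apply Rmult_le_compat_r.
    - left. apply Rinv_0_lt_compat. lra.
    - rewrite S_INR. pose proof (pos_INR v). lra. }
  pose proof (lim_le_of_upper_bound _ _ _ Hsum Hbound) as H1.
  apply (Rmult_le_compat_l E) in H1; [|lra].
  replace (E * (2 / E)) with 2 in H1 by (field; lra). lra.
Qed.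

Lemma psi1_norm_witness (p : nat -> R) (r : R) :
  is_pmf_pos p -> psi1_norm p r ->
  exists c, 0 < c /\ Eexp_le2 p c /\ c <= 2 * r /\ 1 <= r.
Proof.
  intros Hp [Hub Hleast].
  assert (Hr : 1 <= r).
  { assert (- r <= -1); [|lra]. apply Hleast. intros y [c [Hc [HE ->]]].
    pose proof (Eexp_le2_ge1 p c Hp Hc HE). lra. }
  destruct (classic (exists c, 0 < c /\ Eexp_le2 p c /\ c < r + 1))
    as [[c [Hc [HE Hcr]]] | Hnone].
  - exists c. repeat split; auto; lra.
  - exfalso. assert (- r <= - r - 1); [|lra]. apply Hleast.
    intros y [c [Hc [HE ->]]]. apply Rnot_gt_le. intro Hgt.
    apply Hnone. exists c. repeat split; auto; lra.
Qed.

Lemma second_moment_bound (p : nat -> R) (c : R) (M : nat) :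
  (forall k, 0 <= p k) -> 0 < c -> Eexp_le2 p c ->
  sum_f_R0 (fun v => p v * INR v ^ 2) M <= 8 * c ^ 2.
Proof.
  intros Hnn Hc HE.
  assert (Hc2 : 0 < c ^ 2) by (apply pow_lt; lra).
  apply Rle_trans with (sum_f_R0 (fun v => p v * exp (INR v / c) * (4 * c ^ 2)) M).
  - apply sum_Rle. intros v _.
    assert (Hv : 0 <= INR v / c)
      by (unfold Rdiv; apply Rmult_le_pos; [apply pos_INR | left; apply Rinv_0_lt_compat; lra]).
    pose proof (sq_le_4exp _ Hv) as Hsq. pose proof (Hnn v).
    replace (INR v ^ 2) with (c ^ 2 * (INR v / c) ^ 2) by (field; lra).
    assert (c ^ 2 * (INR v / c) ^ 2 <= c ^ 2 * (4 * exp (INR v / c)))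
      by (apply Rmult_le_compat_l; lra).
    nra.
  - rewrite <- scal_sum. specialize (HE M). nra.
Qed.

(* Truncated Laplace transform: comparing e^{-x} with 1 - x + x^2 termwise,
   sum_{v<=M} p_v e^{-lambda v} <= 1 - lambda sum_{v<=M} v p_v + 8 lambda^2 c^2. *)
Lemma truncated_laplace_bound (p : nat -> R) (c lam : R) (M : nat) :
  is_pmf_pos p -> 0 < c -> Eexp_le2 p c -> 0 <= lam ->
  sum_f_R0 (fun v => p v * exp (- (lam * INR v))) M
  <= 1 - lam * sum_f_R0 (fun v => INR v * p v) M + lam ^ 2 * (8 * c ^ 2).
Proof.
  intros [Hnn [_ Hsum]] Hc HE Hlam.
  apply Rle_trans with
    (sum_f_R0 (fun v => p v - lam * (INR v * p v) + lam ^ 2 * (p v * INR v ^ 2)) M).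
  - apply sum_Rle. intros v _.
    assert (Hlv : 0 <= lam * INR v) by (apply Rmult_le_pos; [lra | apply pos_INR]).
    pose proof (exp_neg_quadratic_upper _ Hlv). pose proof (Hnn v).
    apply Rle_trans with (p v * (1 - lam * INR v + (lam * INR v) ^ 2)).
    + apply Rmult_le_compat_l; auto.
    + right. ring.
  - rewrite partial_sum_combination.
    pose proof (sum_incr p M 1 Hsum Hnn).
    pose proof (second_moment_bound p c M Hnn Hc HE).
    assert (0 <= lam ^ 2) by (apply pow_le; lra).
    nra.
Qed.

Lemma laplace_transform_bound (p : nat -> R) (c mu lam : R) (B : nat) :
  is_pmf_pos p -> 0 < c -> Eexp_le2 p c ->
  infinite_sum (fun k => INR k * p k) mu -> 0 < lam -> 16 * lam * c ^ 2 <= mu ->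
  sum_1_to B (fun v => p v * exp (- (lam * INR v))) <= exp (- (lam * mu / 2)).
Proof.
  intros Hp Hc HE Hmu Hlam Hsmall.
  pose proof (fun M => truncated_laplace_bound p c lam M Hp Hc HE (Rlt_le _ _ Hlam)) as Htrunc.
  destruct Hp as [Hnn [Hp0 _]].
  set (X := sum_1_to B (fun v => p v * exp (- (lam * INR v)))).
  set (C := lam ^ 2 * (8 * c ^ 2)) in *.
  assert (Hterm : forall v, 0 <= p v * exp (- (lam * INR v)))
    by (intro v; apply Rmult_le_pos; [apply Hnn | left; apply exp_pos]).
  assert (Hmean_nn : forall k, 0 <= INR k * p k)
    by (intro k; apply Rmult_le_pos; [apply pos_INR | apply Hnn]).
  (* Letting the truncation level grow gives X <= 1 - lambda mu + C. *)
  assert (HX : X <= 1 - lam * mu + C).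
  { assert (Hmean : forall M, sum_f_R0 (fun k => INR k * p k) M <= (1 + C - X) / lam).
    { intro M. apply (Rmult_le_reg_l lam); [lra|].
      replace (lam * ((1 + C - X) / lam)) with (1 + C - X) by (field; lra).
      set (M' := Nat.max B M).
      pose proof (partial_sum_mono _ M M' Hmean_nn (Nat.le_max_r B M)).
      pose proof (partial_sum_mono _ B M' Hterm (Nat.le_max_l B M)).
      pose proof (Htrunc M').
      assert (X <= sum_f_R0 (fun v => p v * exp (- (lam * INR v))) B)
        by (unfold X; rewrite sum_1_to_partial_sum, Hp0; lra).
      nra. }
    pose proof (lim_le_of_upper_bound _ _ _ Hmu Hmean) as H.
    apply (Rmult_le_compat_l lam) in H; [|lra].
    replace (lam * ((1 + C - X) / lam)) with (1 + C - X) in H by (field; lra).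
    lra. }
  assert (HC : C <= lam * mu / 2) by (unfold C; nra).
  pose proof (exp_ineq1_le (- (lam * mu / 2))). lra.
Qed.

Definition tail_weight (p2 : nat -> R) (s : list nat) : R :=
  fold_right (fun w acc => p2 w * acc) 1 s.

Definition tilt (lam : R) (K : nat) (s : list nat) : R :=
  exp (- (lam * INR (list_sum (firstn K s)))).

Lemma tilt_cons (lam : R) (K v : nat) (s : list nat) :
  tilt lam (S K) (v :: s) = exp (- (lam * INR v)) * tilt lam K s.
Proof.
  unfold tilt. simpl. rewrite plus_INR, <- exp_plus. f_equal. ring.
Qed.

Lemma tail_tilt_bound (p2 : nat -> R) (lam q : R) (B : nat) :
  (forall k, 0 <= p2 k) -> sum_1_to B p2 <= 1 -> 0 <= q ->
  sum_1_to B (fun v => p2 v * exp (- (lam * INR v))) <= q ->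
  forall L K, box_sum L B (fun s => tail_weight p2 s * tilt lam K s) <= q ^ Nat.min L K.
Proof.
  intros Hnn Hmass Hq Hlap.
  assert (Hw : forall K s, 0 <= tail_weight p2 s * tilt lam K s).
  { intros K s. apply Rmult_le_pos; [|left; apply exp_pos].
    induction s; simpl; [lra | apply Rmult_le_pos; auto]. }
  assert (Hterm : forall v, 0 <= p2 v * exp (- (lam * INR v)))
    by (intro v; apply Rmult_le_pos; [apply Hnn | left; apply exp_pos]).
  induction L as [|L IH]; intros K.
  - unfold tilt, tail_weight. destruct K; simpl; rewrite Rmult_0_r, Ropp_0, exp_0; lra.
  - destruct K as [|K]; simpl Nat.min.
    + (* No tilt: each further coordinate contributes its mass, at most 1. *)
      rewrite (box_sum_cons_factor L B _ (fun s => tail_weight p2 s * tilt lam 0 s) p2)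
        by (intros v s; unfold tilt; simpl; ring).
      pose proof (box_sum_nonneg L B _ (Hw 0%nat)).
      specialize (IH 0%nat). rewrite Nat.min_0_r in IH. simpl in IH |- *.
      pose proof (sum_1_to_nonneg B p2 Hnn). nra.
    + (* The first tilted coordinate contributes its Laplace transform, at most q. *)
      rewrite (box_sum_cons_factor L B _ (fun s => tail_weight p2 s * tilt lam K s)
                 (fun v => p2 v * exp (- (lam * INR v))))
        by (intros v s; rewrite tilt_cons; simpl; ring).
      pose proof (box_sum_nonneg L B _ (Hw K)).
      pose proof (sum_1_to_nonneg B _ Hterm).
      simpl. apply Rmult_le_compat; auto.
Qed.

(* E[e^{-lambda S_{K+1}}] over a box of prefixes of length L+1 >= K+1 is at most
   q^K: the first coordinate contributes E e^{-lambda T_1} <= 1. *)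
Lemma cylinder_tilt_bound (p1 p2 : nat -> R) (lam q : R) (B L K : nat) :
  is_pmf_pos p1 -> is_pmf_pos p2 -> 0 <= lam -> 0 <= q ->
  sum_1_to B (fun v => p2 v * exp (- (lam * INR v))) <= q -> (K <= L)%nat ->
  box_sum (S L) B (fun s => cyl_weight p1 p2 s * tilt lam (S K) s) <= q ^ K.
Proof.
  intros Hp1 Hp2 Hlam Hq Hlap HKL.
  rewrite (box_sum_cons_factor L B _ (fun s => tail_weight p2 s * tilt lam K s)
             (fun v => p1 v * exp (- (lam * INR v))))
    by (intros v s; rewrite tilt_cons; simpl; unfold tail_weight; ring).
  pose proof (tail_tilt_bound p2 lam q B (proj1 Hp2) (pmf_partial_mass_le1 p2 B Hp2)
                Hq Hlap L K) as Htail.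
  rewrite Nat.min_r in Htail by exact HKL.
  assert (Hhead : sum_1_to B (fun v => p1 v * exp (- (lam * INR v))) <= 1).
  { apply Rle_trans with (sum_1_to B p1); [|apply pmf_partial_mass_le1; auto].
    apply sum_1_to_le. intro v. pose proof (proj1 Hp1 v).
    assert (exp (- (lam * INR v)) <= 1).
    { rewrite <- exp_0. apply exp_le_mono. pose proof (pos_INR v). nra. }
    nra. }
  assert (0 <= sum_1_to B (fun v => p1 v * exp (- (lam * INR v)))).
  { apply sum_1_to_nonneg. intro v.
    apply Rmult_le_pos; [apply (proj1 Hp1) | left; apply exp_pos]. }
  assert (0 <= q ^ K) by (apply pow_le; auto).
  nra.
Qed.

Definition extend (s : list nat) (M : nat) : nat -> nat :=
  fun j => if Nat.leb j (length s) then nth (j - 1) s 0%nat else M.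

Lemma extend_in_cylinder (s : list nat) (M : nat) (A : (nat -> nat) -> Prop) :
  (1 <= M)%nat -> cyl_sub s A -> A (extend s M).
Proof.
  intros HM Hs. apply Hs; intros j Hj; unfold extend.
  - destruct (Nat.leb_spec j (length s)); [reflexivity | lia].
  - destruct (Nat.leb_spec j (length s)); lia.
Qed.

Lemma Ssum_shift (t : nat -> nat) (K : nat) :
  Ssum t (S K) = (t 1%nat + Ssum (fun j => t (S j)) K)%nat.
Proof. induction K; simpl in *; lia. Qed.

Lemma Ssum_prefix (K : nat) : forall (s : list nat) (t : nat -> nat),
  (forall j, (1 <= j <= length s)%nat -> t j = nth (j - 1) s 0%nat) ->
  (K <= length s)%nat -> Ssum t K = list_sum (firstn K s).
Proof.
  induction K as [|K IH]; intros s t Ht HK; [reflexivity|].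
  destruct s as [|v s]; [simpl in HK; lia|].
  rewrite Ssum_shift, firstn_cons. simpl list_sum.
  rewrite (Ht 1%nat) by (simpl; lia).
  rewrite (IH s (fun j => t (S j))); [reflexivity| |simpl in HK; lia].
  intros j Hj. rewrite Ht by (simpl; lia).
  replace (S j - 1)%nat with (S (j - 1)) by lia. reflexivity.
Qed.

Lemma chernoff_partial_sum (p1 p2 : nat -> R) (K : nat) (a lam q : R) :
  is_pmf_pos p1 -> is_pmf_pos p2 -> 0 <= lam -> 0 <= q ->
  (forall B, sum_1_to B (fun v => p2 v * exp (- (lam * INR v))) <= q) ->
  Prob_le p1 p2 (fun t => INR (Ssum t (S K)) <= a) (exp (lam * a) * q ^ K).
Proof.
  intros Hp1 Hp2 Hlam Hq Hlap x [L [B [c [Hc ->]]]].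
  assert (Hbound : 0 <= exp (lam * a) * q ^ K)
    by (apply Rmult_le_pos; [left; apply exp_pos | apply pow_le; auto]).
  assert (Hw : forall s, 0 <= cyl_weight p1 p2 s).
  { intros [|v s]; simpl; [lra|]. apply Rmult_le_pos; [apply (proj1 Hp1)|].
    induction s; simpl; [lra | apply Rmult_le_pos; auto; apply (proj1 Hp2)]. }
  destruct (le_lt_dec L K) as [HLK | HKL].
  - (* A cylinder of length <= K is never inside the event: extend it by a value > a. *)
    eapply Rle_trans; [apply (box_sum_le L B _ (fun _ => 0)) | rewrite box_sum_zero; lra].
    intros s Hs. destruct (c s) eqn:Ecs; [exfalso | lra].
    destruct (INR_unbounded a) as [M HM].
    pose proof (extend_in_cylinder s (S M) _ ltac:(lia) (Hc s Ecs)) as Hev.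
    cbv beta in Hev. simpl Ssum in Hev.
    assert (Hlast : extend s (S M) (S K) = S M)
      by (unfold extend; destruct (Nat.leb_spec (S K) (length s)); lia).
    rewrite Hlast, plus_INR in Hev. rewrite S_INR in Hev.
    pose proof (pos_INR (Ssum (extend s (S M)) K)). lra.
  - destruct L as [|L]; [lia|].
    eapply Rle_trans.
    + apply (box_sum_le _ _ _ (fun s => exp (lam * a) * (cyl_weight p1 p2 s * tilt lam (S K) s))).
      intros s Hs. pose proof (Hw s).
      assert (0 < exp (lam * a) * tilt lam (S K) s)
        by (apply Rmult_lt_0_compat; apply exp_pos).
      destruct (c s) eqn:Ecs; [|nra].
      (* On the event, e^{lambda a} e^{-lambda S_{K+1}} >= 1. *)
      pose proof (extend_in_cylinder s 1 _ ltac:(lia) (Hc s Ecs)) as Hev.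
      cbv beta in Hev.
      rewrite (Ssum_prefix (S K) s) in Hev; [| |lia].
      2: { intros j Hj. unfold extend.
           destruct (Nat.leb_spec j (length s)); [reflexivity | lia]. }
      assert (1 <= exp (lam * a) * tilt lam (S K) s).
      { unfold tilt. rewrite <- exp_plus, <- exp_0. apply exp_le_mono. nra. }
      nra.
    + rewrite box_sum_scal. apply Rmult_le_compat_l; [left; apply exp_pos|].
      apply cylinder_tilt_bound; auto. lia.
Qed.

Lemma Prob_le_mono (p1 p2 : nat -> R) (A A' : (nat -> nat) -> Prop) (b b' : R) :
  (forall t, A t -> A' t) -> b <= b' -> Prob_le p1 p2 A' b -> Prob_le p1 p2 A b'.
Proof.
  intros HAA' Hbb' HA' x [L [B [c [Hc Hx]]]].
  assert (x <= b); [|lra]. apply HA'. exists L, B, c. split; auto.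
  intros s Hcs t Ht Ht'. apply HAA'. apply (Hc s Hcs); auto.
Qed.

Lemma Ssum_mono (t : nat -> nat) (i j : nat) : (i <= j)%nat -> (Ssum t i <= Ssum t j)%nat.
Proof. intros H. induction H; simpl; lia. Qed.

Lemma large_N_event (m n N : nat) (t : nat -> nat) (I : Z) :
  (1 <= m)%nat -> (0 <= I)%Z -> is_N m n t N -> (Z.of_nat N > I)%Z ->
  INR (Ssum t (S (S (Z.to_nat I)))) <= INR n / INR m.
Proof.
  intros Hm HI [[_ HN] | [HN _]] HNI; [subst; lia|].
  unfold Nset in HN.
  pose proof (Ssum_mono t (S (S (Z.to_nat I))) (S N) ltac:(lia)) as Hmono.
  assert (Hnat : (m * Ssum t (S (S (Z.to_nat I))) <= n)%nat) by nia.
  assert (Hm0 : 0 < INR m) by (apply lt_0_INR; lia).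
  apply le_INR in Hnat. rewrite mult_INR in Hnat.
  apply (Rmult_le_reg_l (INR m)); auto. field_simplify; lra.
Qed.

Lemma Int_part_nonneg (x : R) :
  0 <= x -> (0 <= Int_part x)%Z /\ x < INR (S (Z.to_nat (Int_part x))).
Proof.
  intros Hx. destruct (base_Int_part x) as [Hlow Hhigh].
  assert (HI : (0 <= Int_part x)%Z).
  { apply le_IZR. apply Rnot_lt_le. intro Hneg.
    assert (IZR (Int_part x) <= -1) by (apply IZR_le; apply lt_IZR in Hneg; lia).
    lra. }
  split; auto. rewrite S_INR, INR_IZR_INZ, Z2Nat.id by exact HI. lra.
Qed.

Lemma chernoff_value (a mu lam : R) (k : nat) :
  0 <= lam -> 3 * a <= INR k * mu ->
  exp (lam * a) * exp (- (lam * mu / 2)) ^ k <= exp (- (lam * a / 2)).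
Proof.
  intros Hlam Hk.
  assert (Hpow : exp (- (lam * mu / 2)) ^ k = exp (INR k * - (lam * mu / 2))).
  { clear Hk. induction k; simpl; [rewrite Rmult_0_l, exp_0; auto|].
    rewrite IHk, <- exp_plus. f_equal. destruct k; simpl; ring. }
  rewrite Hpow, <- exp_plus. apply exp_le_mono. nra.
Qed.

Theorem mainTheorem6 :
  exists K : R, 0 < K /\
  forall (m n : nat) (p1 p2 : nat -> R) (tau mu : R),
    (1 <= m)%nat ->
    is_pmf_pos p1 -> is_pmf_pos p2 ->
    (exists r1, psi1_norm p1 r1 /\ r1 <= tau) ->
    (exists r2, psi1_norm p2 r2 /\ r2 <= tau) ->
    infinite_sum (fun k => INR k * p2 k) mu ->     (* mu = E T_2 *)
    Prob_le p1 p2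
      (fun t => exists N, is_N m n t N /\
          (Z.of_nat N > Int_part (3 * INR n / (INR m * mu)))%Z)
      (K * exp (- (1 / K) * (INR n * mu / (INR m * tau ^ 2)))).
Proof.
  exists 128. split; [lra|].
  intros m n p1 p2 tau mu Hm Hp1 Hp2 _ [r2 [Hr2 Hr2tau]] Hmu.
  destruct (psi1_norm_witness p2 r2 Hp2 Hr2) as [c [Hc [HcE [Hcr Hr1]]]].
  pose proof (mean_ge1 p2 mu Hp2 Hmu) as Hmu1.
  assert (Hm0 : 0 < INR m) by (apply lt_0_INR; lia).
  assert (Htau2 : 0 < tau ^ 2) by (apply pow_lt; lra).
  set (a := INR n / INR m).
  set (lam := mu / (64 * tau ^ 2)).
  assert (Hlam : 0 < lam) by (apply Rdiv_lt_0_compat; lra).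
  destruct (Int_part_nonneg (3 * INR n / (INR m * mu))) as [HI Hk].
  { unfold Rdiv. apply Rmult_le_pos; [pose proof (pos_INR n); lra | left; apply Rinv_0_lt_compat; nra]. }
  set (I := Int_part (3 * INR n / (INR m * mu))) in *.
  apply (Prob_le_mono p1 p2 _ (fun t => INR (Ssum t (S (S (Z.to_nat I)))) <= a)
           (exp (lam * a) * exp (- (lam * mu / 2)) ^ S (Z.to_nat I)) _).
  - intros t [N [HN HNI]]. apply (large_N_event m n N); auto.
  - replace (128 * exp (- (1 / 128) * (INR n * mu / (INR m * tau ^ 2))))
      with (128 * exp (- (lam * a / 2))) by (unfold lam, a; f_equal; f_equal; field; lra).
    assert (Hvalue : 3 * a <= INR (S (Z.to_nat I)) * mu).
    { unfold a. replace (3 * (INR n / INR m)) with (3 * INR n / (INR m * mu) * mu)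
        by (field; lra). apply Rmult_le_compat_r; lra. }
    pose proof (chernoff_value a mu lam _ (Rlt_le _ _ Hlam) Hvalue).
    pose proof (exp_pos (- (lam * a / 2))). lra.
  - apply chernoff_partial_sum; auto; [lra | left; apply exp_pos|].
    intro B. apply (laplace_transform_bound p2 c); auto.
    assert (Hc2 : c ^ 2 <= 4 * tau ^ 2) by nra.
    unfold lam. apply (Rmult_le_reg_r (64 * tau ^ 2)); [lra|].
    field_simplify; [|lra]. nra.
Qed.
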